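(* Let $A\in\mathbb{R}^{n\times n}$ be an adequate matrix that is group invertible. Then $A$ is a $P_{\#}$-matrix.
   Context: $R(A)$, $N(A)$ denote the range and null space of $A$. $A$ is group invertible if there is $X$ with $AXA=A$, $XAX=X$, $AX=XA$; equivalently $R(A)\cap N(A)=\{0\}$ (i.e. $\operatorname{rank}A=\operatorname{rank}A^2$). $A$ is called adequate if (1) all principal minors of $A$ are nonnegative, and (2) for every principal minor that vanishes, the associated rows of $A$ are linearly dependent and the associated columns of $A$ are linearly dependent. A matrix $A$ is a $P_{\#}$-matrix if: $x\in R(A)$ and $x_i(Ax)_i\le 0$ for all $i$ imply $x=0$. *)

From HB Require Import structures.
From mathcomp Require Import all_boot all_order all_algebra.
From mathcomp Require Import Rstruct.
Set Implicit Arguments. Unset Strict Implicit. Unset Printing Implicit Defensive.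
Import Order.TTheory GRing.Theory Num.Theory.
Local Open Scope ring_scope.

Section Defs.
Variable R : realFieldType.
Variable n : nat.

Definition principal_submx (A : 'M[R]_n) (S : {set 'I_n}) : 'M[R]_#|S| :=
  \matrix_(i < #|S|, j < #|S|) A (enum_val i) (enum_val j).

Definition principal_minor (A : 'M[R]_n) (S : {set 'I_n}) : R :=
  \det (principal_submx A S).

Definition rows_of (A : 'M[R]_n) (S : {set 'I_n}) : 'M[R]_(#|S|, n) :=
  \matrix_(i < #|S|, j < n) A (enum_val i) j.
Definition cols_of (A : 'M[R]_n) (S : {set 'I_n}) : 'M[R]_(n, #|S|) :=
  \matrix_(i < n, j < #|S|) A i (enum_val j).

Definition adequate (A : 'M[R]_n) : Prop :=
  forall S : {set 'I_n}, S != set0 ->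
    0 <= principal_minor A S /\
    (principal_minor A S = 0 ->
       ~~ row_free (rows_of A S) /\ ~~ row_free (trmx (cols_of A S))).

Definition group_invertible (A : 'M[R]_n) : Prop :=
  exists X : 'M[R]_n, A *m X *m A = A /\ X *m A *m X = X /\ A *m X = X *m A.

Definition in_range (A : 'M[R]_n) (x : 'cV[R]_n) : Prop :=
  exists y : 'cV[R]_n, x = A *m y.

Definition P_sharp (A : 'M[R]_n) : Prop :=
  forall x : 'cV[R]_n, in_range A x ->
    (forall i : 'I_n, x i 0 * (A *m x) i 0 <= 0) -> x = 0.
End Defs.

From HB Require Import structures.
From mathcomp Require Import all_boot all_order all_algebra.
From mathcomp Require Import Rstruct.
From mathcomp Require Import ring lra.
Set Implicit Arguments. Unset Strict Implicit. Unset Printing Implicit Defensive.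
Import Order.TTheory GRing.Theory Num.Theory.
Local Open Scope ring_scope.

(* Call x sign-reversing for A when x_i (Ax)_i <= 0 for every i.  The core of
   the proof is that a sign-reversing vector of an adequate matrix A lies in
   the kernel of A (adequate_sign_reversing_kernel).  The theorem follows: if
   x = Ay is sign-reversing and X is the group inverse of A, then Ax = 0 and
   x = AXAy = XAAy = X(Ax) = 0.

   The kernel property is proved by induction on the support of x.
   - If every principal minor of A indexed by a subset of supp x were positive,
     then so would be those of A + D for any nonnegative diagonal D (expand
     along one row at a time).  But d_i = -(Ax)_i / x_i >= 0 on supp x makes
     (A + D)x vanish on supp x, so the principal minor of A + D on supp x is 0.
     Hence some nonempty G in supp x has a vanishing principal minor of A.
   - Adequacy then gives z <> 0 with Az = 0 and supp z in G.
   - Moving x along z up to the first point x + tz where a coordinate of supp x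
     vanishes keeps Ax, keeps the signs of x, and shrinks the support. *)

(* Determinants of square matrices whose sizes are equal but not convertible. *)
Lemma det_cast_eq (R : comNzRingType) m1 m2 (e : m1 = m2)
    (M : 'M[R]_m1) (N : 'M[R]_m2) :
  (forall i j, M i j = N (cast_ord e i) (cast_ord e j)) -> \det M = \det N.
Proof.
case: m2 / e N => N MN; congr (\det _); apply/matrixP => i j.
by rewrite MN !cast_ord_id.
Qed.

Section Enumeration.
Variable n : nat.
Implicit Types (T : {set 'I_n}) (k : 'I_n).

Lemma enum_setD1 T k : enum (T :\ k) = rem k (enum T).
Proof.
rewrite rem_filter ?enum_uniq // /enum_mem -filter_predI; apply: eq_filter => x.
by rewrite /= in_setD1.
Qed.

(* The i-th element of T :\ k is the element of T whose rank is i lifted past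
   the rank of k; this identifies the principal submatrix on T :\ k with a
   minor of the principal submatrix on T. *)
Lemma enum_val_setD1 T k (kT : k \in T) (e : #|T :\ k| = #|T|.-1)
    (i : 'I_#|T :\ k|) :
  enum_val i = enum_val (lift (enum_rank_in kT k) (cast_ord e i)).
Proof.
have rank_k : index k (enum T) = enum_rank_in kT k.
  rewrite -[X in index X _](nth_enum_rank_in k kT kT) // index_uniq ?enum_uniq //.
  by rewrite -cardE ltn_ord.
have rank_lt : (enum_rank_in kT k < size (enum T))%N by rewrite -cardE ltn_ord.
rewrite (enum_val_nth k) (enum_val_nth k) enum_setD1 remE /= rank_k /bump /=.
rewrite nth_cat size_take rank_lt; case: ltnP => hi; first by rewrite nth_take.
by rewrite nth_drop add1n addSn subnKC.
Qed.

Lemma enum_val_eq_rank_in T k (kT : k \in T) (i : 'I_#|T|) :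
  (enum_val i == k) = (i == enum_rank_in kT k).
Proof.
apply/eqP/eqP => [ik|->]; last by rewrite enum_rankK_in.
by rewrite -(enum_valK_in kT i) ik.
Qed.

End Enumeration.

Lemma mul_addr_ge0 (R : realFieldType) (a b : R) :
  `|b| <= `|a| -> 0 <= a * (a + b).
Proof. by case: (ler0P a) => ha; case: (ler0P b) => hb; nra. Qed.

Lemma oppr_ratio_ge0 (R : realFieldType) (a b : R) :
  a != 0 -> a * b <= 0 -> 0 <= - b / a.
Proof.
move=> a_neq0 ab_le0; have -> : - b / a = - (a * b) / (a * a) by field.
by rewrite divr_ge0 ?oppr_ge0 // -expr2 sqr_ge0.
Qed.

Lemma sign_reversal_transfer (R : realFieldType) (a b c : R) :
  0 <= a * b -> a * c <= 0 -> (a = 0 -> b = 0) -> b * c <= 0.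
Proof.
move=> ab_ge0 ac_le0 a0b0.
have [/a0b0 ->|a_neq0] := eqVneq a 0; first by rewrite mul0r.
have aa_gt0 : 0 < a * a by rewrite -expr2 exprn_even_gt0.
by rewrite -(pmulr_rle0 _ aa_gt0) mulrACA mulr_ge0_le0.
Qed.

Section PrincipalMinors.
Variables (R : realFieldType) (n : nat).
Implicit Types (A B M : 'M[R]_n) (S T : {set 'I_n}) (x : 'cV[R]_n).

Definition cv_support x : {set 'I_n} := [set j | x j 0 != 0].

Lemma in_cv_support x j : (j \in cv_support x) = (x j 0 != 0).
Proof. by rewrite inE. Qed.

Lemma principal_minor_set0 A : principal_minor A set0 = 1.
Proof.
rewrite /principal_minor; move: (principal_submx A set0); rewrite cards0.
exact: det_mx00.
Qed.

Lemma eq_principal_minor A B S :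
  (forall i j, i \in S -> j \in S -> A i j = B i j) ->
  principal_minor A S = principal_minor B S.
Proof.
move=> eqAB; congr (\det _); apply/matrixP => i j.
by rewrite !mxE eqAB // enum_valP.
Qed.

(* Adding d to the diagonal entry k adds d times the complementary principal
   minor (Laplace expansion along the row of k). *)
Lemma principal_minor_diag_update A T k (kT : k \in T) (d : R) :
  principal_minor (A + d *: delta_mx k k) T =
  principal_minor A T + d * principal_minor A (T :\ k).
Proof.
rewrite /principal_minor; set r := enum_rank_in kT k.
set P := principal_submx A T.
have -> : principal_submx (A + d *: delta_mx k k) T = P + d *: delta_mx r r.
  by apply/matrixP => i j; rewrite !mxE !enum_val_eq_rank_in.
have same_cofactor j : cofactor (P + d *: delta_mx r r) r j = cofactor P r j.
  congr (_ * \det _); apply/matrixP => a b.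
  by rewrite !mxE eq_sym (negbTE (neq_lift r a)) andFb mulr0 addr0.
rewrite (expand_det_row _ r).
under eq_bigr => j _ do rewrite same_cofactor !mxE eqxx andTb mulrDl.
rewrite big_split /= -/P (expand_det_row P r); congr (_ + _).
  by apply: eq_bigr => j _; rewrite mxE.
rewrite (bigD1 r) //= eqxx mulr1 big1 ?addr0; last first.
  by move=> j /negbTE ->; rewrite mulr0 mul0r.
rewrite /cofactor exprD -expr2 sqrr_sign mul1r; congr (_ * _); symmetry.
have e : #|T :\ k| = #|T|.-1 by rewrite (cardsD1 k T) kT.
apply: (@det_cast_eq _ _ _ e _ (row' r (col' r P))) => i j.
by rewrite !mxE (enum_val_setD1 kT e i) (enum_val_setD1 kT e j).
Qed.

(* If all principal minors of A indexed by subsets of S are positive, so are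
   those of A + D for a nonnegative diagonal D; induction on the number of
   nonzero entries of D in S, removing one with principal_minor_diag_update. *)
Lemma diag_shift_minor_gt0 A (d : 'I_n -> R) S :
  (forall i, 0 <= d i) ->
  (forall T, T \subset S -> 0 < principal_minor A T) ->
  0 < principal_minor (A + diag_mx (\row_i d i)) S.
Proof.
have [m] := ubnP #|[set i in S | d i != 0]|.
elim: m A d => // m IH A d; rewrite ltnS => card_le d_ge0 minA_gt0.
have [D0|[k]] := set_0Vmem [set i in S | d i != 0].
  rewrite (@eq_principal_minor _ A) ?minA_gt0 // => i j iS _; rewrite !mxE.
  have : i \notin [set i in S | d i != 0] by rewrite D0 in_set0.
  by rewrite inE iS negbK => /eqP ->; rewrite mul0rn addr0.
rewrite inE => /andP[kS dk_neq0].
pose d' i := if i == k then 0 else d i.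
have -> : A + diag_mx (\row_i d i) =
          (A + d k *: delta_mx k k) + diag_mx (\row_i d' i).
  apply/matrixP => i j; rewrite !mxE /d'.
  by case: (eqVneq i k) => [->|_]; case: (eqVneq j k) => [->|_];
    rewrite ?mulr1n ?mulr0n ?mulr1 ?mulr0 ?addr0 ?addrA.
apply: IH => [||T TS].
- apply: leq_trans card_le; rewrite (cardsD1 k [set i in S | d i != 0]).
  rewrite inE kS dk_neq0 add1n ltnS subset_leq_card //.
  apply/subsetP => i; rewrite !inE /d'.
  by case: (eqVneq i k) => [->|_]; rewrite ?eqxx ?andbF.
- by move=> i; rewrite /d'; case: (i == k).
have [kT|kNT] := boolP (k \in T).
  rewrite (principal_minor_diag_update _ kT) addr_gt0 ?minA_gt0 // mulr_gt0 //.
    by rewrite lt_def dk_neq0 d_ge0.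
  by rewrite minA_gt0 // (subset_trans _ TS) // subD1set.
rewrite (@eq_principal_minor _ A) ?minA_gt0 // => i j iT _; rewrite !mxE.
rewrite (_ : i == k = false) ?andFb ?mulr0 ?addr0 //.
by apply: contraNF kNT => /eqP <-.
Qed.

(* If Mx vanishes on the support of x <> 0, the principal minor of M on that
   support vanishes: the restriction of x is a nonzero kernel vector of the
   transposed principal submatrix. *)
Lemma kernel_on_support_minor M x :
  x != 0 -> (forall i, i \in cv_support x -> (M *m x) i 0 = 0) ->
  principal_minor M (cv_support x) = 0.
Proof.
move=> x_neq0 Mx0; set S := cv_support x.
have /cV0Pn [j xj_neq0] := x_neq0; have jS : j \in S by rewrite in_cv_support.
apply/eqP; rewrite /principal_minor -det_tr; apply/det0P.
exists (\row_s x (enum_val s) 0).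
  apply/rV0Pn; exists (enum_rank_in jS j).
  by rewrite mxE enum_rankK_in.
apply/matrixP => z i; rewrite ord1 !mxE -[RHS](Mx0 _ (enum_valP i)) mxE.
rewrite (bigID (mem S)) /= [X in _ = _ + X]big1 ?addr0; last first.
  by move=> k; rewrite in_cv_support negbK => /eqP ->; rewrite mulr0.
rewrite (big_enum_val (fun k => M (enum_val i) k * x k 0)) /=.
by apply: eq_bigr => s _; rewrite !mxE mulrC.
Qed.

Lemma dependent_cols_kernel A G :
  ~~ row_free (cols_of A G)^T ->
  exists2 z : 'cV[R]_n, z != 0 & A *m z = 0 /\ cv_support z \subset G.
Proof.
rewrite -kermx_eq0 => /rowV0Pn [v /sub_kermxP vK /rV0Pn [s0 vs0_neq0]].
pose z := \col_j \sum_(s < #|G|) (enum_val s == j)%:R * v 0 s.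
have zE s : z (enum_val s) 0 = v 0 s.
  rewrite mxE (bigD1 s) //= eqxx mul1r big1 ?addr0 // => t ts.
  by rewrite (inj_eq enum_val_inj) (negbTE ts) mul0r.
have zG : cv_support z \subset G.
  apply/subsetP => j; rewrite in_cv_support mxE; apply: contraR => jNG.
  rewrite big1 // => s _; rewrite (_ : (enum_val s == j) = false) ?mul0r //.
  by apply: contraNF jNG => /eqP <-; apply: enum_valP.
exists z; first by apply/cV0Pn; exists (enum_val s0); rewrite zE.
split => //; apply/matrixP => i k; rewrite ord1 !mxE.
rewrite (bigID (mem G)) /= [X in _ + X]big1 ?addr0; last first.
  move=> j jNG; rewrite (_ : z j 0 = 0) ?mulr0 //.
  by apply: contraNeq jNG => zj; apply: (subsetP zG); rewrite in_cv_support.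
rewrite (big_enum_val (fun j => A i j * z j 0)) /=.
transitivity ((v *m (cols_of A G)^T) 0 i); last by rewrite vK mxE.
by rewrite mxE; apply: eq_bigr => s _; rewrite zE !mxE mulrC.
Qed.

End PrincipalMinors.

Section SignReversal.
Variables (R : realFieldType) (n : nat).
Implicit Types (A : 'M[R]_n) (x z : 'cV[R]_n) (G T : {set 'I_n}).

Definition sign_reversing A x : Prop := forall i, x i 0 * (A *m x) i 0 <= 0.

(* A nonzero sign-reversing vector x of an adequate A gives a nonempty G in the
   support of x with a vanishing principal minor: otherwise all principal
   minors of A on the support are positive, contradicting the singularity of
   A + D on the support, where D = diag(-(Ax)_i / x_i) is nonnegative. *)
Lemma sign_reversing_zero_minor A x :
  adequate A -> x != 0 -> sign_reversing A x ->
  exists2 G : {set 'I_n},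
    G != set0 & G \subset cv_support x /\ principal_minor A G = 0.
Proof.
move=> adeqA x_neq0 srx; set S := cv_support x.
have [/existsP[G /and3P[G_neq0 GS /eqP minG0]]|] := boolP
    [exists G : {set 'I_n}, [&& G != set0, G \subset S & principal_minor A G == 0]].
  by exists G.
rewrite negb_exists => /forallP no_zero_minor.
have minA_gt0 T : T \subset S -> 0 < principal_minor A T.
  move=> TS; have [->|T_neq0] := eqVneq T set0.
    by rewrite principal_minor_set0 ltr01.
  have [minT_ge0 _] := adeqA T T_neq0; rewrite lt_def minT_ge0 andbT.
  by move: (no_zero_minor T); rewrite T_neq0 TS.
pose d j := if x j 0 != 0 then - (A *m x) j 0 / x j 0 else 0.
have d_ge0 j : 0 <= d j by rewrite /d; case: ifP => // xj; apply: oppr_ratio_ge0.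
have := diag_shift_minor_gt0 d_ge0 minA_gt0.
rewrite kernel_on_support_minor ?ltxx // => i; rewrite in_cv_support => xi.
by rewrite mulmxDl mul_diag_mx !mxE /d xi mulfVK // [X in _ - X]mxE subrr.
Qed.

(* Moving x along a direction z supported in supp x, up to the first point
   where a coordinate vanishes, preserves the signs of x and shrinks its
   support. *)
Lemma shrink_support x z :
  z != 0 -> cv_support z \subset cv_support x ->
  exists t : R, (forall j, 0 <= x j 0 * (x + t *: z) j 0) /\
    cv_support (x + t *: z) \proper cv_support x.
Proof.
move=> /cV0Pn [j0 zj0_neq0] zx.
have [j1 zj1_neq0 ratio_min] := @arg_minP _ _ 'I_n j0
  (fun j => z j 0 != 0) (fun j => `|x j 0 / z j 0|) zj0_neq0.
have x_on_supp_z j : z j 0 != 0 -> x j 0 != 0.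
  by move=> zj; rewrite -in_cv_support; apply: (subsetP zx); rewrite in_cv_support.
exists (- (x j1 0 / z j1 0)); split=> [j|].
  rewrite !mxE; have [->|zj_neq0] := eqVneq (z j 0) 0.
    by rewrite mulr0 addr0 -expr2 sqr_ge0.
  apply: mul_addr_ge0; rewrite normrM normrN.
  apply: le_trans (ler_wpM2r (normr_ge0 _) (ratio_min j zj_neq0)) _.
  by rewrite -normrM mulfVK.
apply/properP; split.
  apply/subsetP => j; rewrite !in_cv_support !mxE; apply: contra_neq => xj0.
  have [->|zj_neq0] := eqVneq (z j 0) 0; first by rewrite xj0 mulr0 addr0.
  by move: (x_on_supp_z j zj_neq0); rewrite xj0 eqxx.
exists j1; first by rewrite in_cv_support x_on_supp_z.
by rewrite in_cv_support !mxE mulNr mulfVK // subrr eqxx.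
Qed.

Lemma adequate_sign_reversing_kernel A x :
  adequate A -> sign_reversing A x -> A *m x = 0.
Proof.
move=> adeqA; have [m] := ubnP #|cv_support x|; elim: m x => // m IH x.
rewrite ltnS => supp_le srx.
have [->|x_neq0] := eqVneq x 0; first by rewrite mulmx0.
have [G G_neq0 [Gx minG0]] := sign_reversing_zero_minor adeqA x_neq0 srx.
have [_ /(_ minG0) [_ colsG_dep]] := adeqA G G_neq0.
have [z z_neq0 [Az0 zG]] := dependent_cols_kernel colsG_dep.
have [t [same_sign shrink]] := shrink_support z_neq0 (subset_trans zG Gx).
have Ax_eq : A *m (x + t *: z) = A *m x.
  by rewrite mulmxDr -scalemxAr Az0 scaler0 addr0.
rewrite -Ax_eq; apply: IH => [|i].
  exact: leq_trans (proper_card shrink) supp_le.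
rewrite Ax_eq; apply: sign_reversal_transfer (same_sign i) (srx i) _ => /eqP xi0.
apply: contraTeq xi0 => x'i_neq0.
by rewrite -in_cv_support (subsetP (proper_sub shrink)) ?in_cv_support.
Qed.

End SignReversal.

From Stdlib Require Import Reals.

Theorem mainTheorem3 (n : nat) (A : 'M[R]_n) :
  adequate A -> group_invertible A -> P_sharp A.
Proof.
move=> adeqA [X [AXA [_ AX_XA]]] x [y ->] sr_Ay.
have AAy0 : A *m (A *m y) = 0 := adequate_sign_reversing_kernel adeqA sr_Ay.
by rewrite -[in LHS]AXA AX_XA -!mulmxA AAy0 !mulmx0.
Qed.
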